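(* If $R \subseteq \mathbb{N}$ is Turing computable and $A \subseteq \mathbb{N}$ is bi-immune, then the image set $\sigma_R(A) = \{\sigma_R(a) : a \in A\}$ is bi-immune.
   Context: $\mathbb{N}$ denotes the non-negative integers; $g \circ f$ means apply $f$ first. For $i \in \mathbb{N}$, $\sigma_{(i)}$ is the permutation of $\mathbb{N}$ swapping $i$ and $i+1$ and fixing all other numbers. For $R \subseteq \mathbb{N}$ with increasing enumeration $r_0 < r_1 < \cdots$, define $\sigma_R : \mathbb{N} \to \mathbb{N}$ by $\sigma_R(x) = \lim_{n \to \infty} (\sigma_{(r_0)} \circ \sigma_{(r_1)} \circ \cdots \circ \sigma_{(r_n)})(x)$ (eventually constant for each $x$; for finite $R$ it is the finite composition, $\sigma_\emptyset = \mathrm{id}$). A set $A$ is immune if it is infinite and contains no infinite computably enumerable subset; $A$ is bi-immune if both $A$ and $\mathbb{N} - A$ are immune. *)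

(* Computability via mu-recursive (partial recursive) functions. *)
From Stdlib Require Import Arith List Sorted.
Import ListNotations.

Inductive prog : Type :=
| PZero : prog
| PSucc : prog
| PProj : nat -> prog                (* i-th argument (0-based) *)
| PComp : prog -> list prog -> prog
| PRec  : prog -> prog -> prog
| PMu   : prog -> prog.

Inductive eval : prog -> list nat -> nat -> Prop :=
| ev_zero : forall args, eval PZero args 0
| ev_succ : forall x args, eval PSucc (x :: args) (S x)
| ev_proj : forall i args, i < length args -> eval (PProj i) args (nth i args 0)
| ev_comp : forall f gs args ys v,
    evals gs args ys -> eval f ys v -> eval (PComp f gs) args v
| ev_rec0 : forall g h args v, eval g args v -> eval (PRec g h) (0 :: args) v
| ev_recS : forall g h n args r v,
    eval (PRec g h) (n :: args) r -> eval h (n :: r :: args) v ->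
    eval (PRec g h) (S n :: args) v
| ev_mu : forall f args n,
    eval f (n :: args) 0 ->
    (forall m, m < n -> exists k, eval f (m :: args) (S k)) ->
    eval (PMu f) args n
with evals : list prog -> list nat -> list nat -> Prop :=
| evs_nil : forall args, evals [] args []
| evs_cons : forall g gs args y ys,
    eval g args y -> evals gs args ys -> evals (g :: gs) args (y :: ys).

Definition computable_set (R : nat -> Prop) : Prop :=
  exists p : prog, forall n : nat,
    (R n -> eval p [n] 1) /\ (~ R n -> eval p [n] 0).

Definition ce_set (W : nat -> Prop) : Prop :=
  exists p : prog, forall n : nat, W n <-> exists v, eval p [n] v.

Definition infinite_set (A : nat -> Prop) : Prop :=
  forall m : nat, exists n : nat, m <= n /\ A n.

Definition immune (A : nat -> Prop) : Prop :=
  infinite_set A /\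
  forall W : nat -> Prop, ce_set W -> (forall n, W n -> A n) -> ~ infinite_set W.

Definition bi_immune (A : nat -> Prop) : Prop :=
  immune A /\ immune (fun n => ~ A n).

Definition swap (i x : nat) : nat :=
  if Nat.eqb x i then S i else if Nat.eqb x (S i) then i else x.

Definition enum_below (R : nat -> Prop) (N : nat) (l : list nat) : Prop :=
  (forall i, In i l <-> (i < N /\ R i)) /\ StronglySorted lt l.

(** [sigmaR R x y] : sigma_R(x) = y, i.e. the compositions
    sigma_(r_0) o sigma_(r_1) o ... o sigma_(r_n) (rightmost applied first)
    applied to x are eventually constantly equal to y. Here the finite
    prefixes of the enumeration of R are taken as the lists of elements of R
    below N, N -> infinity (for finite R this becomes the full composition). *)
Definition sigmaR (R : nat -> Prop) (x y : nat) : Prop :=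
  exists N0 : nat, forall (N : nat) (l : list nat),
    N0 <= N -> enum_below R N l -> fold_right swap x l = y.

Definition sigma_image (R A : nat -> Prop) : nat -> Prop :=
  fun y => exists a, A a /\ sigmaR R a y.

From Stdlib Require Import Arith List Sorted Lia Classical ClassicalDescription FinFun.
Import ListNotations.

(** For a set R with increasing enumeration r_0 < r_1 < ..., the limit
    permutation sigma_R has an explicit description: sigma_R(x) = x+1 if
    x is in R, and otherwise sigma_R(x) is the start of the maximal block
    [y, x) of consecutive elements of R ending just below x.  We first
    prove this formula for finite compositions of transpositions (adding
    a generator smaller than all the others), which identifies sigma_R
    with an explicit function [sigma_fun].  From the formula we read off
    three properties of sigma_R:
    - it is injective (each composition of transpositions is);
    - it misses at most one number (only the start of a final infinite
      block of R can fail to be a value);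
    - when R is computable, it is computed by a mu-recursive program,
      so preimages of c.e. sets under sigma_R are c.e. (this uses that
      evaluation of programs is deterministic).
    An abstract transfer lemma shows that any map with these three
    properties carries immune sets to immune sets, and also carries
    complements of immune images; bi-immunity of sigma_R(A) follows. *)

(** Induction on programs, with the hypothesis on all components of a
    composition (the automatically generated principle omits them). *)
Definition prog_nested_ind (P : prog -> Prop) (H0 : P PZero) (H1 : P PSucc)
  (H2 : forall i, P (PProj i))
  (H3 : forall f gs, P f -> Forall P gs -> P (PComp f gs))
  (H4 : forall g h, P g -> P h -> P (PRec g h))
  (H5 : forall f, P f -> P (PMu f)) : forall p, P p :=
  fix F p := match p return P p with
  | PZero => H0 | PSucc => H1 | PProj i => H2 i
  | PComp f gs => H3 f gs (F f)
      ((fix G (l : list prog) : Forall P l := match l with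
         | [] => @Forall_nil _ P
         | g :: l' => @Forall_cons _ P g l' (F g) (G l') end) gs)
  | PRec g h => H4 g h (F g) (F h)
  | PMu f => H5 f (F f)
  end.

Definition deterministic (p : prog) : Prop :=
  forall args v v', eval p args v -> eval p args v' -> v = v'.

Lemma evals_det (gs : list prog) : Forall deterministic gs ->
  forall args ys ys', evals gs args ys -> evals gs args ys' -> ys = ys'.
Proof.
  induction 1 as [|g gs Hg _ IH]; intros args ys ys' E1 E2.
  - inversion E1; inversion E2; reflexivity.
  - inversion E1; subst; inversion E2; subst.
    f_equal; [eapply Hg | eapply IH]; eauto.
Qed.

Lemma eval_det (p : prog) : deterministic p.
Proof.
  induction p as [| |i|f gs IHf IHgs|g h IHg IHh|f IHf] using prog_nested_ind;
    intros args v v' E1 E2.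
  - inversion E1; inversion E2; reflexivity.
  - inversion E1; subst; inversion E2; subst; reflexivity.
  - inversion E1; subst; inversion E2; subst; reflexivity.
  - inversion E1; subst; inversion E2; subst.
    assert (ys = ys0) by (eapply evals_det; eauto); subst.
    eapply IHf; eauto.
  - assert (Hrec : forall n args v v', eval (PRec g h) (n :: args) v ->
                     eval (PRec g h) (n :: args) v' -> v = v').
    { induction n; intros args' w w' F1 F2;
        inversion F1; subst; inversion F2; subst.
      - eapply IHg; eauto.
      - assert (r = r0) by (eapply IHn; eauto); subst. eapply IHh; eauto. }
    destruct args as [|n args]; [inversion E1|]. eapply Hrec; eauto.
  - (* both searches stop at the first zero of f *)
    inversion E1 as [| | | | | | ? ? ? Z1 M1]; subst.
    inversion E2 as [| | | | | | ? ? ? Z2 M2]; subst.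
    destruct (lt_eq_lt_dec v v') as [[lt|eq]|lt]; auto; exfalso.
    + destruct (M2 v lt) as [k Hk]. discriminate (IHf _ _ _ Z1 Hk).
    + destruct (M1 v' lt) as [k Hk]. discriminate (IHf _ _ _ Z2 Hk).
Qed.

Lemma ce_preimage (g : nat -> nat) (q : prog) (W : nat -> Prop) :
  (forall x, eval q [x] (g x)) -> ce_set W -> ce_set (fun x => W (g x)).
Proof.
  intros Hq [pw Hw]. exists (PComp pw [q]). intro n. rewrite Hw. split.
  - intros [v Hv]. exists v. apply ev_comp with (ys := [g n]); auto.
    repeat constructor; auto.
  - intros [v Hv]. inversion Hv as [| | | ? ? ? ys ? Hgs Hf | | |]; subst.
    inversion Hgs as [|? ? ? y ys' Hy Hnil]; subst. inversion Hnil; subst.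
    rewrite (eval_det _ _ _ _ Hy (Hq n)) in Hf. eauto.
Qed.

Lemma ev_proj_eq (i : nat) (args : list nat) (v : nat) :
  i < length args -> nth i args 0 = v -> eval (PProj i) args v.
Proof. intros; subst; constructor; auto. Qed.

Definition prog_apply0 (q : prog) : prog := PComp q [PProj 0].

Lemma eval_apply0 (q : prog) (n : nat) (rest : list nat) (v : nat) :
  eval q [n] v -> eval (prog_apply0 q) (n :: rest) v.
Proof.
  intro Hq. apply ev_comp with (ys := [n]); auto.
  constructor; [apply ev_proj_eq; simpl; [lia|reflexivity] | constructor].
Qed.

Definition prog_if : prog := PRec (PProj 1) (PProj 2).

Lemma eval_if (b : bool) (a c : nat) :
  eval prog_if [Nat.b2n b; a; c] (if b then a else c).
Proof.
  unfold prog_if; destruct b.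
  - apply ev_recS with (r := c); [apply ev_rec0|]; apply ev_proj_eq; simpl; auto; lia.
  - apply ev_rec0, ev_proj_eq; simpl; auto; lia.
Qed.

Definition computes_pred (c : prog) (p : nat -> bool) : Prop :=
  forall n, eval c [n] (Nat.b2n (p n)).

(** [run_start p x] is the least y <= x with [y, x) contained in p. *)
Fixpoint run_start (p : nat -> bool) (x : nat) : nat :=
  match x with 0 => 0 | S k => if p k then run_start p k else S k end.

(** The explicit formula for sigma_R, for a boolean predicate [p]. *)
Definition sigma_fun (p : nat -> bool) (x : nat) : nat :=
  if p x then S x else run_start p x.

Lemma run_start_ext (p q : nat -> bool) (x : nat) :
  (forall i, i < x -> p i = q i) -> run_start p x = run_start q x.
Proof.
  induction x as [|k IH]; intro E; simpl; auto.
  rewrite (E k) by lia. rewrite IH by (intros; apply E; lia). reflexivity.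
Qed.

Lemma sigma_fun_ext (p q : nat -> bool) (x : nat) :
  (forall i, i <= x -> p i = q i) -> sigma_fun p x = sigma_fun q x.
Proof.
  intro E. unfold sigma_fun. rewrite (E x) by lia.
  rewrite (run_start_ext p q) by (intros; apply E; lia). reflexivity.
Qed.

Lemma run_start_block (p : nat -> bool) (w e : nat) :
  (w = 0 \/ p (w - 1) = false) -> w <= e ->
  (forall z, w <= z < e -> p z = true) -> run_start p e = w.
Proof.
  intro Hw; induction e as [|e IH]; intros Hle Hz; simpl; [lia|].
  destruct (Nat.eq_dec w (S e)) as [->|Hne].
  - destruct Hw as [Hw|Hw]; [lia|]. rewrite Nat.sub_1_r in Hw. simpl in Hw.
    now rewrite Hw.
  - rewrite Hz by lia. apply IH; [lia | intros; apply Hz; lia].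
Qed.

Lemma run_start_fresh (p : nat -> bool) (x : nat) :
  (x = 0 \/ p (x - 1) = false) -> run_start p x = x.
Proof. intro Hx. apply run_start_block; auto; intros; lia. Qed.

Lemma run_start_above (p : nat -> bool) (r x : nat) :
  p r = false -> r < x -> r < run_start p x.
Proof.
  intro Hr; induction x as [|k IH]; intro Hlt; simpl; [lia|].
  destruct (Nat.eq_dec k r) as [->|Hne]; [rewrite Hr; lia|].
  destruct (p k); [apply IH|]; lia.
Qed.

Lemma run_start_prepend (p q : nat -> bool) (r x : nat) :
  (forall i, p i = orb (i =? r) (q i)) -> (forall i, i <= r -> q i = false) ->
  r < x ->
  run_start p x = (if run_start q x =? S r then r else run_start q x).
Proof.
  intros Hp Hq. induction x as [|k IH]; intro Hlt; [lia|]. simpl.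
  rewrite Hp. destruct (Nat.eq_dec k r) as [->|Hne].
  - rewrite Nat.eqb_refl, (Hq r), Nat.eqb_refl by lia. simpl.
    apply run_start_fresh. destruct r; [left; reflexivity | right].
    rewrite Hp, Hq, (proj2 (Nat.eqb_neq (S r - 1) (S r))) by lia. reflexivity.
  - rewrite (proj2 (Nat.eqb_neq k r)) by lia. simpl.
    destruct (q k); [apply IH; lia|].
    rewrite (proj2 (Nat.eqb_neq (S k) (S r))) by lia.
    reflexivity.
Qed.

Lemma sigma_fun_prepend (p q : nat -> bool) (r x : nat) :
  (forall i, p i = orb (i =? r) (q i)) -> (forall i, i <= r -> q i = false) ->
  sigma_fun p x = swap r (sigma_fun q x).
Proof.
  intros Hp Hq.
  assert (Hp_below : forall i, i < r -> p i = false).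
  { intros i Hi. rewrite Hp, Hq, (proj2 (Nat.eqb_neq i r)) by lia. reflexivity. }
  unfold sigma_fun, swap. rewrite Hp.
  destruct (lt_eq_lt_dec x r) as [[Hlt| ->]|Hgt].
  -
    rewrite (proj2 (Nat.eqb_neq x r)), Hq by lia. simpl.
    rewrite run_start_fresh by (destruct x; [left | right; apply Hp_below]; auto; lia).
    rewrite run_start_fresh by (destruct x; [left | right; apply Hq]; auto; lia).
    rewrite (proj2 (Nat.eqb_neq x r)), (proj2 (Nat.eqb_neq x (S r))) by lia.
    reflexivity.
  - rewrite Nat.eqb_refl, (Hq r) by lia. simpl.
    rewrite run_start_fresh by (destruct r; [left | right; apply Hq]; auto; lia).
    rewrite Nat.eqb_refl. reflexivity.
  - rewrite (proj2 (Nat.eqb_neq x r)) by lia. simpl.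
    destruct (q x) eqn:Hqx.
    + rewrite (proj2 (Nat.eqb_neq (S x) r)) by lia.
      rewrite (proj2 (Nat.eqb_neq (S x) (S r))) by lia.
      reflexivity.
    + rewrite (run_start_prepend p q r x) by auto.
      pose proof (run_start_above q r x (Hq r (le_n r)) Hgt) as Habove.
      rewrite (proj2 (Nat.eqb_neq (run_start q x) r)) by lia.
      reflexivity.
Qed.

Definition memb (l : list nat) (i : nat) : bool := existsb (Nat.eqb i) l.

Lemma memb_In (l : list nat) (i : nat) : memb l i = true <-> In i l.
Proof.
  unfold memb. rewrite existsb_exists. split.
  - intros [j [Hj Hij]]. apply Nat.eqb_eq in Hij. subst; auto.
  - intro Hi. exists i. split; auto. apply Nat.eqb_refl.
Qed.

Lemma fold_swap_sorted (l : list nat) (x : nat) :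
  StronglySorted lt l -> fold_right swap x l = sigma_fun (memb l) x.
Proof.
  induction 1 as [|r l _ IH Hr].
  - simpl. unfold sigma_fun. simpl. symmetry. apply run_start_fresh.
    destruct x; [left | right]; reflexivity.
  - simpl fold_right. rewrite IH. symmetry. apply sigma_fun_prepend; [reflexivity|].
    intros i Hi. apply Bool.not_true_iff_false. rewrite memb_In. intro Hin.
    rewrite Forall_forall in Hr. specialize (Hr i Hin). lia.
Qed.

Lemma swap_inj (i x x' : nat) : swap i x = swap i x' -> x = x'.
Proof.
  unfold swap. destruct (Nat.eqb_spec x i), (Nat.eqb_spec x (S i)),
    (Nat.eqb_spec x' i), (Nat.eqb_spec x' (S i)); lia.
Qed.

Lemma fold_swap_inj (l : list nat) (x x' : nat) :
  fold_right swap x l = fold_right swap x' l -> x = x'.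
Proof. induction l as [|r l IH]; simpl; auto. intro H. apply IH, (swap_inj r), H. Qed.

Lemma first_false_from (p : nat -> bool) (w d : nat) : p (w + d) = false ->
  exists e, w <= e /\ p e = false /\ forall z, w <= z < e -> p z = true.
Proof.
  revert w; induction d as [|d IH]; intros w H.
  - exists w. rewrite Nat.add_0_r in H. repeat split; auto; lia.
  - destruct (p w) eqn:Hw.
    + destruct (IH (S w)) as [e [h1 [h2 h3]]]; [rewrite <- H; f_equal; lia|].
      exists e. repeat split; auto; [lia|]. intros z Hz.
      destruct (Nat.eq_dec z w) as [->|]; [auto | apply h3; lia].
    + exists w. repeat split; auto; lia.
Qed.

Lemma sigma_fun_values (p : nat -> bool) (w : nat) :
  (exists x, sigma_fun p x = w) \/
  ((w = 0 \/ p (w - 1) = false) /\ forall z, w <= z -> p z = true).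
Proof.
  destruct (classic (w <> 0 /\ p (w - 1) = true)) as [[Hw Hp]|Hstart].
  - left. exists (w - 1). unfold sigma_fun. rewrite Hp. lia.
  - assert (Hw : w = 0 \/ p (w - 1) = false).
    { destruct w; [left; reflexivity | right].
      apply Bool.not_true_iff_false. intro; apply Hstart; split; auto. }
    destruct (classic (forall z, w <= z -> p z = true)) as [Hall|Hnot]; [right; auto|].
    left. apply not_all_ex_not in Hnot as [z Hz]. apply imply_to_and in Hz as [Hwz Hpz].
    apply Bool.not_true_iff_false in Hpz.
    destruct (first_false_from p w (z - w)) as [e [h1 [h2 h3]]];
      [now replace (w + (z - w)) with z by lia|].
    exists e. unfold sigma_fun. rewrite h2. apply run_start_block; auto.
Qed.

Definition prog_run_start (c : prog) : prog :=
  PRec PZero (PComp prog_if [prog_apply0 c; PProj 1; prog_apply0 PSucc]).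

Lemma eval_run_start (c : prog) (p : nat -> bool) (x : nat) :
  computes_pred c p -> eval (prog_run_start c) [x] (run_start p x).
Proof.
  intro Hc. induction x as [|x IH].
  - apply ev_rec0. constructor.
  - apply ev_recS with (r := run_start p x); auto.
    apply ev_comp with (ys := [Nat.b2n (p x); run_start p x; S x]); [|apply eval_if].
    repeat apply evs_cons; try apply evs_nil.
    + apply eval_apply0, Hc.
    + apply ev_proj_eq; simpl; auto.
    + apply eval_apply0. constructor.
Qed.

Definition prog_sigma (c : prog) : prog :=
  PComp prog_if [prog_apply0 c; prog_apply0 PSucc; prog_apply0 (prog_run_start c)].

Lemma eval_sigma (c : prog) (p : nat -> bool) (x : nat) :
  computes_pred c p -> eval (prog_sigma c) [x] (sigma_fun p x).
Proof.
  intro Hc. apply ev_comp with (ys := [Nat.b2n (p x); S x; run_start p x]); [|apply eval_if].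
  repeat apply evs_cons; try apply evs_nil; apply eval_apply0.
  - apply Hc.
  - constructor.
  - apply eval_run_start, Hc.
Qed.

Definition decide (R : nat -> Prop) (n : nat) : bool :=
  if excluded_middle_informative (R n) then true else false.

Lemma decide_spec (R : nat -> Prop) (n : nat) : decide R n = true <-> R n.
Proof.
  unfold decide; destruct (excluded_middle_informative (R n)); split;
    auto; discriminate.
Qed.

Definition sigma (R : nat -> Prop) : nat -> nat := sigma_fun (decide R).

Lemma enum_below_exists (R : nat -> Prop) (N : nat) : exists l, enum_below R N l.
Proof.
  exists (filter (decide R) (seq 0 N)). split.
  - intro i. rewrite filter_In, in_seq, decide_spec. intuition lia.
  - generalize 0. induction N as [|N IH]; intro s; simpl; [constructor|].
    destruct (decide R s); auto. constructor; auto.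
    apply Forall_forall. intros z Hz. apply filter_In in Hz as [Hz _].
    apply in_seq in Hz. lia.
Qed.

Lemma enum_below_sigma (R : nat -> Prop) (N : nat) (l : list nat) (x : nat) :
  x < N -> enum_below R N l -> fold_right swap x l = sigma R x.
Proof.
  intros Hx [Hin HS]. rewrite fold_swap_sorted by auto. apply sigma_fun_ext.
  intros i Hi. apply Bool.eq_iff_eq_true. rewrite memb_In, Hin, decide_spec. intuition lia.
Qed.

Lemma sigmaR_iff (R : nat -> Prop) (a y : nat) : sigmaR R a y <-> y = sigma R a.
Proof.
  split.
  - intros [N0 H]. destruct (enum_below_exists R (N0 + S a)) as [l Hl].
    rewrite <- (H (N0 + S a) l ltac:(lia) Hl).
    apply enum_below_sigma with (N := N0 + S a); auto; lia.
  - intros ->. exists (S a). intros N l HN Hl. apply enum_below_sigma with N; auto; lia.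
Qed.

(** sigma_R is injective, as all its finite approximations are. *)
Lemma sigma_inj (R : nat -> Prop) (x x' : nat) : sigma R x = sigma R x' -> x = x'.
Proof.
  intro H. destruct (enum_below_exists R (S (x + x'))) as [l Hl].
  rewrite <- !(enum_below_sigma R (S (x + x')) l) in H by (auto; lia).
  eapply fold_swap_inj; eauto.
Qed.

Lemma sigma_misses_at_most_one (R : nat -> Prop) (w1 w2 : nat) : w1 < w2 ->
  (exists x, sigma R x = w1) \/ (exists x, sigma R x = w2).
Proof.
  intro Hlt. destruct (sigma_fun_values (decide R) w1) as [H1|[_ H1]]; [left; auto|].
  destruct (sigma_fun_values (decide R) w2) as [H2|[[H2|H2] _]]; [right; auto|lia|].
  rewrite H1 in H2 by lia. discriminate.
Qed.

Lemma sigma_preimage_ce (R W : nat -> Prop) :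
  computable_set R -> ce_set W -> ce_set (fun x => W (sigma R x)).
Proof.
  intros [c Hc]. apply ce_preimage with (q := prog_sigma c).
  intro x. apply eval_sigma. intro n. destruct (decide R n) eqn:E; apply Hc.
  - now apply decide_spec.
  - intro Hn. apply decide_spec in Hn. congruence.
Qed.

Lemma sigma_image_at (R A : nat -> Prop) (x : nat) :
  sigma_image R A (sigma R x) <-> A x.
Proof.
  split.
  - intros [a [Ha Hs]]. apply sigmaR_iff, sigma_inj in Hs. now subst.
  - intro Hx. exists x. split; auto. now apply sigmaR_iff.
Qed.

Section ImmuneTransfer.

Variable f : nat -> nat.
Hypothesis f_inj : forall x y, f x = f y -> x = y.
Hypothesis f_misses_at_most_one :
  forall w1 w2, w1 < w2 -> (exists x, f x = w1) \/ (exists x, f x = w2).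
Hypothesis f_preimage_ce : forall W, ce_set W -> ce_set (fun x => W (f x)).

Lemma infinite_distinct_list (D : nat -> Prop) (k : nat) : infinite_set D ->
  exists l, NoDup l /\ length l = k /\ forall x, In x l -> D x.
Proof.
  intro HD. induction k as [|k [l [Hnd [Hlen Hin]]]].
  - exists []. repeat split; [constructor | intros x []].
  - destruct (HD (S (list_max l))) as [n [Hn Dn]].
    exists (n :: l). repeat split; [|simpl; auto|].
    + constructor; auto. intro Hnl.
      assert (Hm : Forall (fun k => k <= list_max l) l) by (apply list_max_le; lia).
      rewrite Forall_forall in Hm. specialize (Hm n Hnl). lia.
    + intros x [->|Hx]; auto.
Qed.

Lemma infinite_image (D : nat -> Prop) :
  infinite_set D -> infinite_set (fun y => exists x, D x /\ f x = y).
Proof.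
  intros HD m. apply NNPP; intro Hbound.
  destruct (infinite_distinct_list D (S m) HD) as [l [Hnd [Hlen Hin]]].
  assert (Hnd' : NoDup (map f l)) by (apply Injective_map_NoDup; auto).
  assert (Hsub : incl (map f l) (seq 0 m)).
  { intros y Hy. apply in_map_iff in Hy as [x [<- Hx]]. apply in_seq.
    destruct (le_lt_dec m (f x)); [|lia].
    exfalso; apply Hbound. exists (f x). split; eauto. }
  pose proof (NoDup_incl_length Hnd' Hsub) as Hle.
  rewrite length_map, length_seq in Hle. lia.
Qed.

Lemma bounded_below (m : nat) : exists M, forall i, i < m -> f i < M.
Proof.
  induction m as [|m [M HM]]; [exists 0; lia|].
  exists (M + f m + 1). intros i Hi.
  destruct (Nat.eq_dec i m) as [->|]; [lia | specialize (HM i ltac:(lia)); lia].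
Qed.

(** Preimages of infinite sets are infinite, since f misses at most one point. *)
Lemma infinite_preimage (W : nat -> Prop) :
  infinite_set W -> infinite_set (fun x => W (f x)).
Proof.
  intros HW m. destruct (bounded_below m) as [M HM].
  destruct (HW M) as [w1 [h1 W1]]. destruct (HW (S w1)) as [w2 [h2 W2]].
  destruct (f_misses_at_most_one w1 w2 ltac:(lia)) as [[x Hx]|[x Hx]];
    exists x; (split; [|now rewrite Hx]);
    (destruct (le_lt_dec m x) as [|Hlt]; [auto | specialize (HM x Hlt); lia]).
Qed.

Lemma immune_transfer (P Q : nat -> Prop) :
  immune P -> (forall x, P x -> Q (f x)) -> (forall x, Q (f x) -> P x) -> immune Q.
Proof.
  intros [HPinf HPimm] Hinto Hback. split.
  - intro m. destruct (infinite_image P HPinf m) as [y [Hy [x [Hx <-]]]].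
    exists (f x). auto.
  - intros W HW HWQ HWinf.
    apply (HPimm (fun x => W (f x))); auto using infinite_preimage.
Qed.

End ImmuneTransfer.

Theorem mainTheorem11 (R A : nat -> Prop) :
  computable_set R -> bi_immune A -> bi_immune (sigma_image R A).
Proof.
  intros HR [HA HAc].
  pose proof (sigma_inj R) as Hinj.
  pose proof (sigma_misses_at_most_one R) as Honto.
  pose proof (fun W => sigma_preimage_ce R W HR) as Hce.
  split.
  - apply (immune_transfer (sigma R) Hinj Honto Hce A); auto;
      intro x; apply sigma_image_at.
  - apply (immune_transfer (sigma R) Hinj Honto Hce (fun n => ~ A n)); auto;
      intro x; rewrite sigma_image_at; auto.
Qed.
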